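(* Let $K_n$, $L_n$, $C_n$, $K_{1,n-1}$ denote the complete graph, path, cycle and star on $n$ vertices ($L_0$ and $K_0$ are the empty graph, $K_{1,0}=K_1$); their graph-associahedra are the permutohedron $Pe^{n-1}$, associahedron $As^{n-1}$, cyclohedron $Cy^{n-1}$ and stellohedron $St^{n-1}$, with $F(Pe^{n-1})=F_{K_n}$, $F(As^{n-1})=F_{L_n}$, $F(Cy^{n-1})=F_{C_n}$, $F(St^{n-1})=F_{K_{1,n-1}}$. Then $$F_{K_n}=n\,(F_{K_{n-1}})_1\ (n\ge1),\qquad F_{L_n}=\Big(\sum_{k=1}^nF_{L_{k-1}}F_{L_{n-k}}\Big)_1\ (n\ge1),$$ $$F_{C_n}=n\,(F_{L_{n-1}})_1\ (n\ge3),\qquad F_{K_{1,n-1}}=\big((n-1)F_{K_{1,n-2}}+M_{(1)}^{\,n-1}\big)_1\ (n\ge2).$$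
   Context: For a coloring $\lambda:V\to\mathbb{N}=\{1,2,\dots\}$ of a finite simple graph $\Gamma$ with values $i_1<\dots<i_k$, let $I_j=\lambda^{-1}(\{i_1,\dots,i_j\})$, $I_0=\emptyset$. It is ordered if for each $j$, no two distinct vertices $u,w$ with $\lambda(u)=\lambda(w)=i_j$ are joined by a path in $\Gamma$ (possibly a single edge) all of whose internal vertices lie in $I_{j-1}$. $F_\Gamma=\sum_{\lambda\text{ ordered}}\prod_{v\in V}x_{\lambda(v)}$, with $F_\Gamma=1$ for the graph with no vertices. For a composition $\alpha=(a_1,\dots,a_k)$, $M_\alpha=\sum_{i_1<\dots<i_k}x_{i_1}^{a_1}\cdots x_{i_k}^{a_k}$, $M_{()}=1$; $M_{(1)}=\sum_i x_i$. The shifting operator $G\mapsto(G)_1$ is the linear map on quasisymmetric functions with $(M_{(a_1,\dots,a_k)})_1=M_{(a_1,\dots,a_k,1)}$. *)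

(* Quasisymmetric functions are represented as formal power
   series in the variables x_1, x_2, ... : a series is its coefficient function
   on monomials; a monomial is an exponent vector [:: a_1; ...; a_N] : seq nat
   meaning x_1^a_1 ... x_N^a_N (trailing zeros are immaterial). *)
From HB Require Import structures.
From mathcomp Require Import all_boot.
From Stdlib Require Import ClassicalEpsilon.
Set Implicit Arguments. Unset Strict Implicit. Unset Printing Implicit Defensive.

Definition pdec (P : Prop) : bool :=
  if excluded_middle_informative P then true else false.

Definition qs := seq nat -> nat.

Fixpoint splits (s : seq nat) : seq (seq nat * seq nat) :=
  match s with
  | [::] => [:: ([::], [::])]
  | a :: s' => [seq (i :: p.1, (a - i) :: p.2) | i <- iota 0 a.+1, p <- splits s']
  end.

Definition qone : qs := fun s => all (fun a => a == 0) s.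
Definition qadd (F G : qs) : qs := fun s => F s + G s.
Definition qscale (n : nat) (F : qs) : qs := fun s => n * F s.
Definition qmul (F G : qs) : qs := fun s => \sum_(p <- splits s) F p.1 * G p.2.
Definition qpow (F : qs) (n : nat) : qs := iter n (qmul F) qone.

Definition M1 : qs := fun s => sumn s == 1.

(* The shifting operator (M_(a_1..a_k))_1 = M_(a_1..a_k,1), extended linearly:
   the coefficient of a monomial whose sequence of nonzero exponents is
   (a_1,...,a_k) in (G)_1 is, if a_k = 1, the coefficient in G of
   x_1^a_1 ... x_(k-1)^a_(k-1) (= coefficient of M_(a_1..a_(k-1)) when G is
   quasisymmetric), and 0 otherwise. *)
Definition qshift (G : qs) : qs := fun s =>
  let c := [seq a <- s | a != 0] in
  if last 0 c == 1 then G (take (size c).-1 c) else 0.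

Definition ordered (V : finType) (e : rel V) (lam : V -> nat) : Prop :=
  forall u w : V, u != w -> lam u = lam w ->
    ~ (exists p : seq V, path e u (rcons p w) /\ all (fun x => lam x < lam u) p).

(* F_Gamma: coefficient of x_1^s_1 ... x_N^s_N is the number of ordered
   colorings lam : V -> {1..N} (color i+1 encoded by the ordinal i) with
   exactly s_i vertices of color i. *)
Definition FG (V : finType) (e : rel V) : qs := fun s =>
  #|[pred l : {ffun V -> 'I_(size s)} |
      pdec (ordered e (fun v => nat_of_ord (l v)))
      && [forall i : 'I_(size s), #|[pred v | l v == i]| == nth 0 s i]]|.

Definition Kg (n : nat) : rel 'I_n := fun i j => i != j.
Definition Lg (n : nat) : rel 'I_n := fun i j => (i.+1 == j :> nat) || (j.+1 == i :> nat).
Definition Cg (n : nat) : rel 'I_n :=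
  fun i j => (i != j) && ((i.+1 %% n == j :> nat) || (j.+1 %% n == i :> nat)).
Definition Sg (n : nat) : rel 'I_n :=
  fun i j => (i != j) && ((i == 0 :> nat) || (j == 0 :> nat)).
Arguments Kg n : clear implicits.
Arguments Lg n : clear implicits.
Arguments Cg n : clear implicits.
Arguments Sg n : clear implicits.

From mathcomp Require Import all_boot zify.
From Stdlib Require Import ClassicalEpsilon.
Set Implicit Arguments. Unset Strict Implicit. Unset Printing Implicit Defensive.

(* In an ordered coloring of a connected graph the largest color occurs at most
   once.  So the coefficient of a monomial vanishes unless its last nonzero
   exponent is 1, and then deleting the unique vertex v of the largest color
   matches the ordered colorings of Gamma with those of Gamma - v using one
   color less: F_Gamma = (sum_v F_(Gamma - v))_1 for connected Gamma.  F is
   multiplicative on disjoint unions, and deleting a vertex from K_n, L_n, C_n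
   and K_(1,n-1) leaves K_(n-1); L_(k-1) + L_(n-k); L_(n-1); and K_(1,n-2) or
   n-1 isolated vertices, whose F is M_(1)^(n-1), respectively. *)

Lemma pdecP (P : Prop) : reflect P (pdec P).
Proof. by rewrite /pdec; case: excluded_middle_informative => h; constructor. Qed.

Lemma pdec_iff (P Q : Prop) : (P <-> Q) -> pdec P = pdec Q.
Proof. by move=> PQ; case: (pdecP P) => p; case: pdecP => //; tauto. Qed.

Lemma pdec_and (P Q : Prop) : pdec (P /\ Q) = pdec P && pdec Q.
Proof. by case: (pdecP P) => p; case: (pdecP Q) => q; case: pdecP => //=; tauto. Qed.


Lemma card_inj_onto (A B : finType) (f : A -> B) (P : pred A) (Q : pred B) :
  injective f -> (forall a, P a = Q (f a)) ->
  (forall b, Q b -> exists a, b = f a) -> #|P| = #|Q|.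
Proof.
move=> f_inj PQ fQ; rewrite -(card_image f_inj P); apply: eq_card => b.
apply/imageP/idP => [[a Pa ->]|Qb]; first by move: Pa; rewrite !unfold_in PQ.
by have [a bE] := fQ b Qb; exists a => //; rewrite unfold_in PQ -bE.
Qed.

Lemma card_sum_nat (A : finType) (P : pred A) : #|P| = \sum_a (P a : nat).
Proof. by rewrite -sum1_card big_mkcond; apply: eq_bigr => a _; rewrite unfold_in; case: (P a). Qed.

Lemma card_pred_singleton (T : finType) (P : pred T) (t0 : T) :
  (forall t, t = t0) -> #|P| = P t0.
Proof.
move=> T1; case Pt0 : (P t0).
  by rewrite [RHS]/= -(card1 t0); apply: eq_card => t; rewrite !inE (T1 t) eqxx unfold_in Pt0.
by apply: eq_card0 => t; rewrite (T1 t) unfold_in Pt0.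
Qed.

Lemma map_onto (A B : eqType) (f : A -> B) (p : seq B) :
  (forall x, x \in p -> exists y, x = f y) -> exists q, p = map f q.
Proof.
elim: p => [|x p IHp] fp; first by exists [::].
have [y ->] := fp x (mem_head _ _).
have [z zp|q ->] := IHp; first by apply: fp; rewrite inE zp orbT.
by exists (y :: q).
Qed.

Section OrderedColorings.

Variables (V : finType) (e : rel V).

Lemma ordered_same_order (lam lam' : V -> nat) :
  (forall a b, (lam' a < lam' b) = (lam a < lam b)) ->
  ordered e lam -> ordered e lam'.
Proof.
move=> same o u w uw luw [p [pp pa]]; apply: (o u w uw).
  have := same u w; have := same w u; rewrite luw ltnn => ltwu ltuw.
  by apply/eqP; rewrite eqn_leq leqNgt -ltwu leqNgt -ltuw.
by exists p; split=> //; apply: sub_all pa => x /=; rewrite same.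
Qed.

Lemma eq_ordered (lam lam' : V -> nat) : lam =1 lam' -> ordered e lam -> ordered e lam'.
Proof. by move=> eq_lam; apply: ordered_same_order => a b; rewrite !eq_lam. Qed.

End OrderedColorings.

Section Pullback.

Variables (V1 V2 : finType) (f : V1 -> V2) (e1 : rel V1) (e2 : rel V2).
Hypothesis e1E : forall x y, e1 x y = e2 (f x) (f y).

Lemma ordered_pullback (lam : V2 -> nat) :
  injective f -> ordered e2 lam -> ordered e1 (fun x => lam (f x)).
Proof.
move=> f_inj o u w uw luw [p [pp pa]].
apply: (o (f u) (f w) _ luw); first by rewrite (inj_eq f_inj).
exists (map f p); split; last by rewrite all_map.
by rewrite -map_rcons path_map; move: pp; rewrite (eq_path (e' := e1)).
Qed.

Lemma ordered_pullback_path (lam : V2 -> nat) u w p :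
  ordered e1 (fun x => lam (f x)) ->
  u != w -> lam u = lam w -> path e2 u (rcons p w) ->
  all (fun x => lam x < lam u) p ->
  (forall x, x \in u :: rcons p w -> exists y, x = f y) -> False.
Proof.
move=> o uw luw pp pa im_f.
have [a ua] := im_f u (mem_head _ _); subst u.
have [x xp|q pwE] := @map_onto _ _ f (rcons p w); first by apply: im_f; rewrite inE xp orbT.
case/lastP: q pwE => [|q b] pwE; first by case: p {pp pa im_f} pwE.
rewrite map_rcons in pwE; case: (rcons_inj pwE) => pE wE; subst p w.
apply: (o a b); [by apply: contraNneq uw => -> | by [] |].
exists q; split; last by rewrite all_map in pa.
by move: pp; rewrite -map_rcons path_map (eq_path (e' := e1)).
Qed.

Lemma FG_iso : injective f -> #|V2| <= #|V1| -> FG e1 =1 FG e2.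
Proof.
move=> f_inj card_le s; have [g fK gK] := inj_card_bij f_inj card_le.
rewrite /FG; symmetry.
apply: (@card_inj_onto _ _ (fun l : {ffun V2 -> 'I_(size s)} => [ffun x => l (f x)])).
- move=> l1 l2 /ffunP eq_l; apply/ffunP => y.
  by have := eq_l (g y); rewrite !ffunE gK.
- move=> l /=; congr (_ && _).
    apply: pdec_iff; split => [o|o u w uw luw [p [pp pa]]].
      by apply: eq_ordered (ordered_pullback f_inj o) => x; rewrite ffunE.
    apply: (ordered_pullback_path (lam := fun v => nat_of_ord (l v)) _ uw luw pp pa).
      by apply: eq_ordered o => x; rewrite ffunE.
    by move=> x _; exists (g x); rewrite gK.
  apply: eq_forallb => i; congr (_ == _).
  apply: (@card_inj_onto _ _ g) => [|x|y _]; first exact: can_inj gK.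
    by rewrite /= ffunE gK.
  by exists (f y); rewrite fK.
- by move=> l _; exists [ffun y => l (g y)]; apply/ffunP => x; rewrite !ffunE fK.
Qed.

End Pullback.

Lemma FG_ext (V : finType) (e1 e2 : rel V) : e1 =2 e2 -> FG e1 =1 FG e2.
Proof. by move=> eq_e; apply: (@FG_iso _ _ id). Qed.

Section ColorReindexing.

Variables (V : finType) (e : rel V).

Lemma FG_reindex s t (g : 'I_(size s) -> 'I_(size t)) :
  {mono g : i j / i < j} ->
  (forall i, nth 0 t (g i) = nth 0 s i) ->
  (forall j, j \notin codom g -> nth 0 t j = 0) ->
  FG e s = FG e t.
Proof.
move=> g_mono nth_g nth_out.
have g_inj : injective g.
  move=> i j gij; apply/val_inj/eqP.
  by rewrite eqn_leq leqNgt -g_mono gij ltnn leqNgt -g_mono gij ltnn.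
rewrite /FG; apply: (@card_inj_onto _ _ (fun l : {ffun V -> 'I_(size s)} => [ffun x => g (l x)])).
- by move=> l1 l2 /ffunP eq_l; apply/ffunP => x; apply: g_inj; have := eq_l x; rewrite !ffunE.
- move=> l /=; congr (_ && _).
    apply: pdec_iff; split; apply: ordered_same_order => a b; by rewrite !ffunE g_mono.
  have count_g i : #|[pred v | [ffun x => g (l x)] v == g i]| = #|[pred v | l v == i]|.
    by apply: eq_card => v; rewrite !unfold_in /= ffunE (inj_eq g_inj).
  apply/forallP/forallP => cnt j; last by have := cnt (g j); rewrite count_g nth_g.
  have [/codomP [i ->]|j_out] := boolP (j \in codom g); first by rewrite count_g nth_g cnt.
  rewrite nth_out //; apply/eqP/eq_card0 => v; rewrite !unfold_in /= ffunE.
  by apply: contraNF j_out => /eqP <-; rewrite codom_f.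
- move=> l' /andP [_ /forallP cnt].
  have im_g x : l' x \in codom g.
    apply: contraT => x_out; have := cnt (l' x); rewrite nth_out //.
    by move/eqP/card0_eq/(_ x); rewrite !unfold_in /= eqxx.
  by exists [ffun x => iinv (im_g x)]; apply/ffunP => x; rewrite !ffunE f_iinv.
Qed.

Lemma FG_cat0 s1 s2 : FG e (s1 ++ 0 :: s2) = FG e (s1 ++ s2).
Proof.
set s := s1 ++ s2; set t := s1 ++ 0 :: s2; set k := size s1.
have size_t : size t = (size s).+1 by rewrite !size_cat addnS.
have k_le : k <= size s by rewrite size_cat leq_addr.
have bump_lt (i : 'I_(size s)) : bump k i < size t.
  by have := ltn_ord i; rewrite size_t /bump; lia.
symmetry; apply: (@FG_reindex _ _ (fun i => Ordinal (bump_lt i))).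
- by move=> i j /=; rewrite !ltnNge leq_bump2.
- move=> i /=; rewrite !nth_cat /bump -/k.
  by case: (ltnP i k) => ik; rewrite ?ik ?(subSn ik) //= ifF //; lia.
- move=> j j_out; have -> : val j = k; last by rewrite nth_cat ltnn subnn.
  apply/eqP; apply: contraNT j_out => jk.
  have unbump_lt : unbump k j < size s by move: jk; have := ltn_ord j; rewrite /unbump /=; lia.
  apply/codomP; exists (Ordinal unbump_lt); apply: val_inj.
  by move: jk; rewrite /= unbumpKcond; lia.
Qed.

Lemma FG_filter0 s : FG e s = FG e [seq a <- s | a != 0].
Proof.
suff FG_catl s1 : FG e (s1 ++ s) = FG e (s1 ++ [seq a <- s | a != 0]) by apply: FG_catl [::].
elim: s s1 => [|a s IHs] s1 //=.
have [->|a0] := eqVneq a 0; first by rewrite FG_cat0 IHs.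
by rewrite -!cat_rcons IHs.
Qed.

End ColorReindexing.

Lemma card_sum_unique (A B : finType) (P : pred A) (R : A -> B -> bool) :
  (forall a, P a -> #|[pred b | R a b]| = 1) ->
  #|P| = \sum_b #|[pred a | P a && R a b]|.
Proof.
move=> R1; rewrite card_sum_nat; under [RHS]eq_bigr do rewrite card_sum_nat.
rewrite exchange_big; apply: eq_bigr => a _ /=.
case Pa: (P a) => /=; last by rewrite big1.
by rewrite -(R1 a Pa) card_sum_nat.
Qed.

(* On a shortest path between two vertices of the largest color, the first
   interior vertex of that color would give a forbidden path. *)
Lemma ordered_max_color_uniq (V : finType) (e : rel V) (lam : V -> nat) m u w :
  (forall x y, connect e x y) -> (forall x, lam x <= m) -> ordered e lam ->
  lam u = m -> lam w = m -> u = w.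
Proof.
move=> e_conn lam_le o lu lw; apply/eqP/negPn/negP => uw.
have /connectP [p0 pp0 lastp0] := e_conn u w.
case: (shortenP pp0) lastp0 => p pp up _ lastp.
have u_notin_p : u \notin p by move: up; rewrite cons_uniq => /andP[].
pose top x := lam x == m.
have has_top : has top p.
  apply/hasP; exists w; last by rewrite /top lw.
  by have := mem_last u p; rewrite -lastp inE eq_sym (negbTE uw).
pose i := find top p; pose x := nth u p i.
have ip : i < size p by rewrite -has_find.
have lx : lam x = m by apply/eqP; exact: (nth_find u has_top).
apply: (o u x); [by apply: contraNneq u_notin_p => ->; rewrite mem_nth | by rewrite lu lx |].
exists (take i p); split.
  by move: pp; rewrite -{1}(cat_take_drop i.+1 p) cat_path (take_nth u ip) => /andP[].
have : all (predC top) (take i p) by rewrite all_predC has_take // ltnn.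
by apply: sub_all => y; rewrite /= /top lu ltn_neqAle lam_le andbT.
Qed.

(* [size (rcons c 1)] is not convertible to [(size c).+1], hence this variant
   of [FG] with the number of colors as a separate argument. *)
Definition FGn (V : finType) (e : rel V) N (s : seq nat) :=
  #|[pred l : {ffun V -> 'I_N} | pdec (ordered e (fun v => nat_of_ord (l v)))
      && [forall i : 'I_N, #|[pred v | l v == i]| == nth 0 s i]]|.

Lemma FGnE (V : finType) (e : rel V) s : FG e s = FGn e (size s) s.
Proof. by []. Qed.

Definition del_vertex n (e : rel 'I_n.+1) (v : 'I_n.+1) : rel 'I_n :=
  fun a b => e (lift v a) (lift v b).

Section DeleteTopVertex.

Variables (n N : nat) (e : rel 'I_n.+1) (v : 'I_n.+1).

Definition ext_top (l : {ffun 'I_n -> 'I_N}) : {ffun 'I_n.+1 -> 'I_N.+1} :=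
  [ffun x => if unlift v x is Some y then widen_ord (leqnSn N) (l y) else ord_max].

Lemma ext_top_v l : ext_top l v = ord_max.
Proof. by rewrite ffunE unlift_none. Qed.

Lemma ext_top_lift l y : ext_top l (lift v y) = widen_ord (leqnSn N) (l y).
Proof. by rewrite ffunE liftK. Qed.

Lemma ext_top_inj : injective ext_top.
Proof.
move=> l1 l2 eq_l; apply/ffunP => y; apply: val_inj.
by have /(congr1 val) := congr1 (fun l : {ffun _ -> _} => l (lift v y)) eq_l; rewrite !ext_top_lift.
Qed.

Lemma neq_lift_ex x : x != v -> exists y, x = lift v y.
Proof. by case: (unliftP v x) => [y ->|->]; [exists y | rewrite eqxx]. Qed.

Lemma ordered_ext_top l :
  ordered e (fun x => nat_of_ord (ext_top l x)) <->
  ordered (del_vertex e v) (fun y => nat_of_ord (l y)).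
Proof.
set lam := fun x => nat_of_ord (ext_top l x).
have lam_v : lam v = N by rewrite /lam ext_top_v.
have lam_lift y : lam (lift v y) = l y by rewrite /lam ext_top_lift.
have lam_lt x : x != v -> lam x < N by move=> /neq_lift_ex [y ->]; rewrite lam_lift.
split => o.
  by apply: eq_ordered (ordered_pullback (e1 := del_vertex e v) _ (@lift_inj _ v) o).
move=> u w uw luw [p [pp pa]].
have uv : u != v.
  apply/eqP => uE; have wv : w != v by rewrite -uE eq_sym.
  by have := lam_lt w wv; rewrite -luw uE lam_v ltnn.
have path_lt x : x \in u :: rcons p w -> lam x < N.
  have luN := lam_lt u uv.
  rewrite inE mem_rcons inE => /or3P [/eqP -> | /eqP -> | /(allP pa) /ltn_trans];
    by [|rewrite -luw|apply].
apply: (ordered_pullback_path (f := lift v) (e1 := del_vertex e v) _ _ uw luw pp pa) => //.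
  by apply: eq_ordered o => y; rewrite lam_lift.
move=> x /path_lt x_lt; apply: neq_lift_ex.
by apply: contraTneq x_lt => ->; rewrite lam_v ltnn.
Qed.

Lemma count_ext_top l c : size c = N ->
  [forall i : 'I_N.+1, #|[pred x | ext_top l x == i]| == nth 0 (rcons c 1) i] =
  [forall i : 'I_N, #|[pred y | l y == i]| == nth 0 c i].
Proof.
move=> size_c.
have widen_inj : injective (widen_ord (leqnSn N)) by move=> a b /(congr1 val) /= /val_inj.
have count_widen j :
    #|[pred x | ext_top l x == widen_ord (leqnSn N) j]| = #|[pred y | l y == j]|.
  symmetry; apply: (@card_inj_onto _ _ (lift v)) => [|y|x]; first exact: lift_inj.
    by rewrite /= ext_top_lift (inj_eq widen_inj).
  have [->|xv _] := eqVneq x v; last exact: neq_lift_ex.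
  by rewrite /= ext_top_v => /eqP/(congr1 val) /= jN; have := ltn_ord j; rewrite -jN ltnn.
have count_max : #|[pred x | ext_top l x == ord_max]| = 1.
  rewrite -(card1 v); apply: eq_card => x; rewrite !inE.
  have [->|/neq_lift_ex [y ->]] := eqVneq x v; first by rewrite ext_top_v eqxx.
  by rewrite ext_top_lift -val_eqE /= ltn_eqF // (negbTE (neq_lift v y)).
have nth_c i : i < N -> nth 0 (rcons c 1) i = nth 0 c i by move=> iN; rewrite nth_rcons size_c iN.
apply/forallP/forallP => cnt i.
  by have /= := cnt (widen_ord (leqnSn N) i); rewrite count_widen nth_c.
have [->|iN] := eqVneq i ord_max; first by rewrite count_max nth_rcons size_c ltnn eqxx.
have ltiN : i < N by move: iN; rewrite -val_eqE /= ltn_neqAle -ltnS ltn_ord andbT.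
have -> : i = widen_ord (leqnSn N) (Ordinal ltiN) by apply: val_inj.
by rewrite count_widen nth_c.
Qed.

End DeleteTopVertex.

Lemma FGn_rcons1 n N (e : rel 'I_n.+1) c : size c = N ->
  FGn e N.+1 (rcons c 1) = \sum_v FGn (del_vertex e v) N c.
Proof.
move=> size_c; pose top_at (l : {ffun 'I_n.+1 -> 'I_N.+1}) v := l v == ord_max.
rewrite /FGn (card_sum_unique (R := top_at)); last first.
  move=> l /andP [_ /forallP /(_ ord_max)].
  by rewrite nth_rcons size_c ltnn eqxx => /eqP <-.
apply: eq_bigr => v _; symmetry; apply: (@card_inj_onto _ _ (ext_top v)).
- exact: ext_top_inj.
- move=> l; rewrite /= /top_at ext_top_v eqxx andbT count_ext_top //; congr (_ && _).
  by apply: pdec_iff; rewrite ordered_ext_top.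
- move=> l /andP [/andP [_ /forallP cnt] /eqP lv].
  have max_v : #|[pred x | l x == ord_max]| = 1.
    by have := cnt ord_max; rewrite nth_rcons size_c ltnn eqxx => /eqP.
  have lift_lt y : l (lift v y) < N.
    rewrite ltn_neqAle -ltnS ltn_ord andbT; apply/negP => /eqP lyN.
    have : 1 < #|[pred x | l x == ord_max]|.
      apply/card_gt1P; exists (lift v y), v; rewrite !inE lv eqxx -val_eqE /= lyN.
      by rewrite eq_sym neq_lift.
    by rewrite max_v.
  exists [ffun y => Ordinal (lift_lt y)]; apply/ffunP => x.
  case: (unliftP v x) => [y ->|->]; rewrite ?ext_top_lift ?ext_top_v //.
  by apply: val_inj; rewrite /= ffunE.
Qed.

Lemma FG_connected n (e : rel 'I_n.+1) :
  (forall x y, connect e x y) ->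
  FG e =1 qshift (fun t => \sum_v FG (del_vertex e v) t).
Proof.
move=> e_conn s; rewrite FG_filter0 /qshift.
have := filter_all (fun a => a != 0) s.
case/lastP: [seq a <- s | a != 0] => [|c a] nz; first by apply: eq_card0 => l; case: (l ord0).
rewrite last_rcons size_rcons /= -cats1 take_size_cat // cats1.
have [->|a1] := eqVneq a 1; first by rewrite FGnE size_rcons FGn_rcons1.
have a0 : a != 0 by move: nz; rewrite all_rcons => /andP[].
apply: eq_card0 => l; apply/negP => /andP [/pdecP o /forallP cnt].
have top_lt : size c < size (rcons c a) by rewrite size_rcons.
have := cnt (Ordinal top_lt); rewrite /= nth_rcons ltnn eqxx => /eqP count_top.
have : 1 < #|[pred x | l x == Ordinal top_lt]| by rewrite count_top ltn_neqAle eq_sym a1 lt0n.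
case/card_gt1P => u [w [lu lw /eqP[]]].
apply: (ordered_max_color_uniq (m := size c) e_conn _ o).
- by move=> x; rewrite -ltnS -(size_rcons c a) ltn_ord.
- by move: lu; rewrite inE => /eqP ->.
- by move: lw; rewrite inE => /eqP ->.
Qed.

Definition cspec (V : finType) N (l : {ffun V -> 'I_N}) : seq nat :=
  mkseq (fun i => #|[pred x | nat_of_ord (l x) == i]|) N.

Lemma forall_count_cspec (V : finType) N (l : {ffun V -> 'I_N}) t : size t = N ->
  [forall i : 'I_N, #|[pred x | l x == i]| == nth 0 t i] = (cspec l == t).
Proof.
move=> size_t; apply/forallP/eqP => [cnt|<- i]; last by rewrite nth_mkseq.
apply: (@eq_from_nth _ 0); first by rewrite size_mkseq size_t.
move=> i; rewrite size_mkseq => iN; rewrite nth_mkseq //.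
by have /eqP <- := cnt (Ordinal iN); apply: eq_card.
Qed.

Lemma FGn_cspec (V : finType) (e : rel V) N t : size t = N ->
  FGn e N t =
  \sum_(l : {ffun V -> 'I_N}) (pdec (ordered e (fun v => nat_of_ord (l v))) && (cspec l == t) : nat).
Proof.
move=> size_t; rewrite /FGn card_sum_nat.
by apply: eq_bigr => l _; rewrite /= forall_count_cspec.
Qed.

Lemma mem_splits s p : p \in splits s <->
  [/\ size p.1 = size s, size p.2 = size s & forall i, nth 0 p.1 i + nth 0 p.2 i = nth 0 s i].
Proof.
elim: s p => [|a s IHs] [t1 t2].
  rewrite /= inE; split => [/eqP [-> ->]|[]]; first by split => // -[].
  by case: t1 => //; case: t2.
split.
  case/flatten_mapP => i; rewrite mem_iota => ia /mapP [[q1 q2] /IHs [sz1 sz2 nthq] [-> ->]].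
  by split; rewrite /= ?sz1 ?sz2 // => -[|j] /=; [lia | apply: nthq].
case: t1 t2 => [|x q1] [|y q2] [sz1 sz2 nthq] //; move: sz1 sz2 => /= [sz1] [sz2].
have xya := nthq 0; rewrite /= in xya.
change ((x :: q1, y :: q2) \in splits (a :: s)); rewrite [splits _]/splits -/splits.
apply/flatten_mapP; exists x; first by rewrite mem_iota; lia.
apply/mapP; exists (q1, q2); first by apply/IHs; split => // i; apply: (nthq i.+1).
by congr (_, _ :: _); lia.
Qed.

Lemma splits_uniq s : uniq (splits s).
Proof.
elim: s => [|a s IHs] //; rewrite [splits _]/splits -/splits.
apply: (allpairs_uniq (f := fun i (p : seq nat * seq nat) => (i :: p.1, (a - i) :: p.2)));
  rewrite ?iota_uniq //.
by move=> [i [q1 q2]] [j [r1 r2]] _ _ /= [-> -> _ ->].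
Qed.

Lemma mem_sum_eq (T : eqType) (r : seq T) q :
  uniq r -> (q \in r : nat) = \sum_(p <- r) (q == p : nat).
Proof.
move=> r_uniq; rewrite -(count_uniq_mem q r_uniq) -sum1_count big_mkcond.
by apply: eq_bigr => p _; rewrite /= eq_sym; case: (q == p).
Qed.

Section DisjointUnion.

Variables (V1 V2 : finType) (e1 : rel V1) (e2 : rel V2).

Definition sumrel : rel (V1 + V2) :=
  fun x y => match x, y with
             | inl a, inl b => e1 a b
             | inr a, inr b => e2 a b
             | _, _ => false end.

Lemma path_sumrel_inl a q : path sumrel (inl a) q -> forall x, x \in q -> exists y, x = inl y.
Proof.
elim: q a => [|[b|b] q IHq] a //= /andP [_ pq] x; rewrite inE => /orP [/eqP ->|xq].
- by exists b.
- exact: IHq pq x xq.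
Qed.

Lemma path_sumrel_inr a q : path sumrel (inr a) q -> forall x, x \in q -> exists y, x = inr y.
Proof.
elim: q a => [|[b|b] q IHq] a //= /andP [_ pq] x; rewrite inE => /orP [/eqP ->|xq].
- by exists b.
- exact: IHq pq x xq.
Qed.

Lemma ordered_sumrel (lam : V1 + V2 -> nat) :
  ordered sumrel lam <-> ordered e1 (fun a => lam (inl a)) /\ ordered e2 (fun b => lam (inr b)).
Proof.
split => [o|[o1 o2] u w uw luw [p [pp pa]]].
  by split; apply: (ordered_pullback _ _ o) => // x y [].
case: u uw luw pp pa => a uw luw pp pa.
  apply: (ordered_pullback_path (f := inl) (e1 := e1) _ o1 uw luw pp pa) => // x.
  by rewrite inE => /orP [/eqP ->|]; [exists a | apply: path_sumrel_inl pp x].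
apply: (ordered_pullback_path (f := inr) (e1 := e2) _ o2 uw luw pp pa) => // x.
by rewrite inE => /orP [/eqP ->|]; [exists a | apply: path_sumrel_inr pp x].
Qed.

Definition join_col N (l1 : {ffun V1 -> 'I_N}) (l2 : {ffun V2 -> 'I_N}) : {ffun V1 + V2 -> 'I_N} :=
  [ffun x => match x with inl a => l1 a | inr b => l2 b end].

Lemma count_join_col N l1 l2 (i : 'I_N) :
  #|[pred x | join_col l1 l2 x == i]| = #|[pred a | l1 a == i]| + #|[pred b | l2 b == i]|.
Proof.
rewrite !card_sum_nat big_sumType.
by congr (_ + _); apply: eq_bigr => x _; rewrite /= ffunE.
Qed.

Lemma ordered_join_col N l1 l2 :
  ordered sumrel (fun x => nat_of_ord (@join_col N l1 l2 x)) <->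
  ordered e1 (fun a => nat_of_ord (l1 a)) /\ ordered e2 (fun b => nat_of_ord (l2 b)).
Proof.
have col1 : (fun a => nat_of_ord (join_col l1 l2 (inl a))) =1 (fun a => nat_of_ord (l1 a)).
  by move=> a; rewrite ffunE.
have col2 : (fun b => nat_of_ord (join_col l1 l2 (inr b))) =1 (fun b => nat_of_ord (l2 b)).
  by move=> b; rewrite ffunE.
rewrite ordered_sumrel; split=> -[o1 o2]; split.
- exact: eq_ordered col1 o1.
- exact: eq_ordered col2 o2.
- exact: eq_ordered (fsym col1) o1.
- exact: eq_ordered (fsym col2) o2.
Qed.

Lemma mem_splits_cspec s (l1 : {ffun V1 -> 'I_(size s)}) (l2 : {ffun V2 -> 'I_(size s)}) :
  ((cspec l1, cspec l2) \in splits s) =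
  [forall i : 'I_(size s), #|[pred x | join_col l1 l2 x == i]| == nth 0 s i].
Proof.
apply/idP/forallP => [/mem_splits [_ _ nth_s] i|cnt].
  by rewrite count_join_col -nth_s /cspec !nth_mkseq.
apply/mem_splits; split; rewrite /= ?size_mkseq // => i.
have [lt_is|le_si] := ltnP i (size s); last by rewrite !nth_default ?size_mkseq.
by rewrite /cspec !nth_mkseq //; apply/eqP; have := cnt (Ordinal lt_is); rewrite count_join_col.
Qed.

Lemma FG_sumrel : FG sumrel =1 qmul (FG e1) (FG e2).
Proof.
move=> s; rewrite /qmul; set N := size s.
pose O1 (l1 : {ffun V1 -> 'I_N}) := pdec (ordered e1 (fun a => nat_of_ord (l1 a))).
pose O2 (l2 : {ffun V2 -> 'I_N}) := pdec (ordered e2 (fun b => nat_of_ord (l2 b))).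
pose in_splits (l1 : {ffun V1 -> 'I_N}) (l2 : {ffun V2 -> 'I_N}) :=
  (cspec l1, cspec l2) \in splits s.
have -> : FG sumrel s = #|[pred q | O1 q.1 && O2 q.2 && in_splits q.1 q.2]|.
  symmetry; apply: (@card_inj_onto _ _ (fun q => join_col q.1 q.2)).
  - move=> [q1 q2] [r1 r2] /ffunP eq_q; congr (_, _); apply/ffunP => x.
      by have := eq_q (inl x); rewrite !ffunE.
    by have := eq_q (inr x); rewrite !ffunE.
  - move=> [l1 l2]; rewrite /in_splits /= mem_splits_cspec /O1 /O2 -pdec_and.
    by congr (_ && _); apply: pdec_iff; rewrite ordered_join_col.
  - move=> l _; exists ([ffun a => l (inl a)], [ffun b => l (inr b)]).
    by apply/ffunP => -[a|b]; rewrite !ffunE.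
rewrite card_sum_nat -(pair_bigA _ (fun l1 l2 => (O1 l1 && O2 l2 && in_splits l1 l2 : nat))) /=.
transitivity (\sum_(p <- splits s) \sum_l1 \sum_l2
                ((O1 l1 && (cspec l1 == p.1)) * (O2 l2 && (cspec l2 == p.2)))).
  symmetry; rewrite exchange_big; apply: eq_bigr => l1 _.
  rewrite exchange_big; apply: eq_bigr => l2 _.
  rewrite -mulnb /in_splits mem_sum_eq ?splits_uniq // big_distrr; apply: eq_bigr => -[p1 p2] _.
  rewrite xpair_eqE.
  by case: (O1 l1); case: (O2 l2); case: (cspec l1 == p1); case: (cspec l2 == p2).
rewrite big_seq [RHS]big_seq; apply: eq_bigr => -[p1 p2] /mem_splits [/= sz1 sz2 _].
by rewrite !FGnE sz1 sz2 !FGn_cspec // big_distrlr.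
Qed.

End DisjointUnion.

Lemma eq_qshift (G H : qs) : G =1 H -> qshift G =1 qshift H.
Proof. by move=> eq_GH s; rewrite /qshift eq_GH. Qed.

Lemma eq_qmul (F1 F2 G1 G2 : qs) : F1 =1 F2 -> G1 =1 G2 -> qmul F1 G1 =1 qmul F2 G2.
Proof. by move=> eq_F eq_G s; apply: eq_bigr => p _; rewrite eq_F eq_G. Qed.

Lemma qshift_qone : qshift qone =1 M1.
Proof.
move=> s; rewrite /qshift /M1.
have -> : sumn s = sumn [seq a <- s | a != 0] by elim: s => //= a s ->; case: eqP => [->|].
have := filter_all (fun a => a != 0) s.
case/lastP: [seq a <- s | a != 0] => [|c a] //.
rewrite all_rcons last_rcons size_rcons /= -cats1 take_size_cat // sumn_cat /= addn0.
case: c => [|x c] /=; first by case: eqP.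
by case/and3P => a0 x0 _; rewrite /qone /= (negbTE x0) if_same; case: eqP => //; lia.
Qed.

Lemma FG_void (e : rel 'I_0) : FG e =1 qone.
Proof.
move=> s; set l0 : {ffun 'I_0 -> 'I_(size s)} := ffun0 (card_ord 0).
rewrite /FG (card_pred_singleton _ (t0 := l0)) /=; last by move=> l; apply/ffunP => -[].
have -> : pdec (ordered e (fun v => nat_of_ord (l0 v))) = true by apply/pdecP => -[].
have cspec0 : cspec l0 = nseq (size s) 0.
  apply: (@eq_from_nth _ 0) => [|i]; rewrite size_mkseq ?size_nseq // => i_lt.
  by rewrite nth_mkseq // nth_nseq i_lt; apply: eq_card0 => -[].
by rewrite forall_count_cspec // cspec0 /qone eq_sym; congr nat_of_bool; apply/eqP/all_pred1P.
Qed.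

Lemma FG_single (e : rel 'I_1) : FG e =1 M1.
Proof.
move=> s; rewrite (@FG_connected 0) => [|x y]; last by rewrite (ord1 x) (ord1 y) connect0.
by rewrite -qshift_qone; apply: eq_qshift => t; rewrite big_ord1 FG_void.
Qed.

Definition edgeless m : rel 'I_m := fun _ _ => false.
Arguments edgeless m : clear implicits.

Lemma FG_edgeless m : FG (edgeless m) =1 qpow M1 m.
Proof.
elim: m => [|m IHm]; first exact: FG_void.
move=> s; rewrite [qpow _ _]/= -(eq_qmul (@FG_single (edgeless 1)) IHm) -FG_sumrel.
symmetry; apply: (@FG_iso _ _ (@unsplit 1 m)) => [[x|x] [y|y]||] //.
- exact: can_inj unsplitK.
- by rewrite card_sum !card_ord.
Qed.

Lemma connect_Kg m (x y : 'I_m) : connect (Kg m) x y.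
Proof. by have [->|xy] := eqVneq x y; [apply: connect0 | apply: connect1]. Qed.

Lemma Lg_sym m : symmetric (Lg m).
Proof. by move=> x y; rewrite /Lg orbC. Qed.

Lemma connect_Lg m (x y : 'I_m) : connect (Lg m) x y.
Proof.
wlog xy : x y / x <= y.
  move=> conn; have [/conn //|/ltnW/conn] := leqP x y.
  by rewrite (sym_connect_sym (@Lg_sym m)).
suff conn k (z : 'I_m) : (z : nat) = x + k -> connect (Lg m) x z by apply: (conn (y - x)); lia.
elim: k z => [|k IHk] z zE; first by rewrite (_ : z = x) ?connect0 //; apply: val_inj => /=; lia.
have zk : x + k < m by have := ltn_ord z; lia.
apply: connect_trans (IHk (Ordinal zk) erefl) (connect1 _).
by rewrite /Lg /= zE addnS eqxx.
Qed.

Lemma connect_Cg m (x y : 'I_m) : connect (Cg m) x y.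
Proof.
apply: (connect_sub (e := Lg m)) (connect_Lg x y) => a b ab; apply: connect1.
move: ab; rewrite /Cg /Lg -val_eqE /= => /orP [/eqP abE | /eqP baE].
  by rewrite abE modn_small ?ltn_ord // eqxx andbT; lia.
have ba_lt : b.+1 < m by rewrite baE.
by rewrite (modn_small ba_lt) baE eqxx orbT andbT; lia.
Qed.

Lemma connect_Sg m (x y : 'I_m.+1) : connect (Sg m.+1) x y.
Proof.
have center z : connect (Sg m.+1) z ord0 /\ connect (Sg m.+1) ord0 z.
  have [->|z0] := eqVneq z ord0; first by split; apply: connect0.
  by split; apply: connect1; rewrite /Sg ?z0 1?eq_sym ?z0 //= eqxx ?orbT.
exact: connect_trans (center x).1 (center y).2.
Qed.

Lemma FG_connected_uniform n (e : rel 'I_n.+1) (G : qs) :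
  (forall x y, connect e x y) -> (forall v, FG (del_vertex e v) =1 G) ->
  FG e =1 qscale n.+1 (qshift G).
Proof.
move=> e_conn FG_del s; rewrite FG_connected // /qshift /qscale.
case: ifP => _; last by rewrite muln0.
by under eq_bigr do rewrite FG_del; rewrite sum_nat_const card_ord.
Qed.

Lemma del_vertex_Kg m (v : 'I_m.+1) : del_vertex (Kg m.+1) v =2 Kg m.
Proof. by move=> a b; rewrite /del_vertex /Kg (inj_eq (@lift_inj _ v)). Qed.

Lemma FG_del_vertex_Lg m (v : 'I_m.+1) :
  FG (del_vertex (Lg m.+1) v) =1 qmul (FG (Lg v)) (FG (Lg (m - v))).
Proof.
move=> s; rewrite -FG_sumrel; symmetry.
have v_le : v <= m by rewrite -ltnS ltn_ord.
have left_lt (a : 'I_v) : a < m by have := ltn_ord a; lia.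
have right_lt (b : 'I_(m - v)) : v + b < m by have := ltn_ord b; lia.
pose f x := match x with inl a => Ordinal (left_lt a) | inr b => Ordinal (right_lt b) end.
apply: (@FG_iso _ _ f).
- move=> [a|a] [b|b]; rewrite /del_vertex /Lg /= /bump;
    by have := ltn_ord a; have := ltn_ord b; lia.
- move=> [a|a] [b|b] /(congr1 val) /= ab; move: (ltn_ord a) (ltn_ord b) => lt_a lt_b;
    [congr inl | lia | lia | congr inr]; apply: val_inj => /=; lia.
- by rewrite card_sum !card_ord; lia.
Qed.

Lemma modn_succ_lt x n : x < n -> x.+1 %% n = if x.+1 == n then 0 else x.+1.
Proof. by move=> lt_xn; case: eqP => [->|?]; rewrite ?modnn // modn_small //; lia. Qed.

(* Deleting a vertex [v] of the cycle leaves the path [v+1, ..., m, 0, ..., v-1]. *)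
Lemma FG_del_vertex_Cg m (v : 'I_m.+1) : FG (del_vertex (Cg m.+1) v) =1 FG (Lg m).
Proof.
move=> s; symmetry; have v_le : v <= m by rewrite -ltnS ltn_ord.
have rot_lt (a : 'I_m) : (if v + a < m then v + a else v + a - m) < m.
  by have := ltn_ord a; case: ifP => ?; lia.
pose f a := Ordinal (rot_lt a).
have lift_f a : (lift v (f a) : nat) = if v + a < m then (v + a).+1 else v + a - m.
  by rewrite /= /bump; have := ltn_ord a; case: ifP => ?; lia.
apply: (@FG_iso _ _ f) => // [a b|a b /(congr1 val) /= ab].
  rewrite /del_vertex /Cg /Lg (inj_eq (@lift_inj _ v)) !modn_succ_lt ?ltn_ord //.
  rewrite !lift_f -val_eqE /=.
  by have := ltn_ord a; have := ltn_ord b; repeat case: ifP => ?; lia.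
apply: val_inj => /=; move: ab; have := ltn_ord a; have := ltn_ord b.
by repeat case: ifP => ?; lia.
Qed.

Lemma del_vertex_Sg0 m : del_vertex (Sg m.+1) ord0 =2 edgeless m.
Proof. by move=> a b; rewrite /del_vertex /Sg /edgeless -val_eqE /= /bump; lia. Qed.

Lemma del_vertex_Sg m (v : 'I_m.+1) : v != ord0 -> del_vertex (Sg m.+1) v =2 Sg m.
Proof.
move=> /negbTE v0 a b; rewrite /del_vertex /Sg (inj_eq (@lift_inj _ v)) /= /bump.
by move: v0; rewrite -val_eqE /=; lia.
Qed.

Lemma FG_Kg n : 1 <= n -> FG (Kg n) =1 qscale n (qshift (FG (Kg n.-1))).
Proof.
case: n => // m _; apply: FG_connected_uniform => [|v]; first exact: connect_Kg.
exact: FG_ext (del_vertex_Kg v).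
Qed.

Lemma FG_Lg n : 1 <= n ->
  FG (Lg n) =1 qshift (fun s => \sum_(1 <= k < n.+1) qmul (FG (Lg k.-1)) (FG (Lg (n - k))) s).
Proof.
case: n => // m _ s; rewrite (FG_connected (@connect_Lg m.+1)); apply: eq_qshift => t.
by rewrite big_add1 big_mkord; apply: eq_bigr => v _; rewrite subSS FG_del_vertex_Lg.
Qed.

Lemma FG_Cg n : 1 <= n -> FG (Cg n) =1 qscale n (qshift (FG (Lg n.-1))).
Proof.
case: n => // m _; apply: FG_connected_uniform => [|v]; first exact: connect_Cg.
exact: FG_del_vertex_Cg.
Qed.

Lemma FG_Sg n : 1 <= n ->
  FG (Sg n) =1 qshift (qadd (qscale (n - 1) (FG (Sg (n - 1)))) (qpow M1 (n - 1))).
Proof.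
case: n => // m _ s; rewrite subn1 /= (FG_connected (@connect_Sg m)); apply: eq_qshift => t.
rewrite big_ord_recl /qadd /qscale (FG_ext (@del_vertex_Sg0 m)) FG_edgeless addnC; congr (_ + _).
rewrite (eq_bigr (fun _ => FG (Sg m) t)) ?sum_nat_const ?card_ord // => v _.
by apply: FG_ext; apply: del_vertex_Sg; rewrite -val_eqE.
Qed.

Theorem mainTheorem16 :
  (forall n : nat, 1 <= n ->
     FG (Kg n) =1 qscale n (qshift (FG (Kg n.-1)))) /\
  (forall n : nat, 1 <= n ->
     FG (Lg n) =1
       qshift (fun s => \sum_(1 <= k < n.+1) qmul (FG (Lg k.-1)) (FG (Lg (n - k))) s)) /\
  (forall n : nat, 3 <= n ->
     FG (Cg n) =1 qscale n (qshift (FG (Lg n.-1)))) /\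
  (forall n : nat, 2 <= n ->
     FG (Sg n) =1 qshift (qadd (qscale (n - 1) (FG (Sg (n - 1)))) (qpow M1 (n - 1)))).
Proof.
split; first exact: FG_Kg.
split; first exact: FG_Lg.
split=> n n_ge; [apply: FG_Cg | apply: FG_Sg]; exact: leq_trans n_ge.
Qed.
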